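(* For every integer $n\geq 4$ and every edge $e$ of $G_n$, the graph $G_n - e$ is $(n-3)$-colourable.
   Context: Let $[n]=\{1,\dots,n\}$. A $2$-subset $\{a,b\}$ of $[n]$ with $a<b$ is called stable if $b \neq a+1$ and $\{a,b\}\neq\{1,n\}$; it is written $ab$. For $n\ge 4$, the graph $G_n$ has as vertex set all stable $2$-subsets of $[n]$; two vertices $ab$ ($a<b$) and $cd$ ($c<d$) with $a<c$ are adjacent iff $\{a,b\}\cap\{c,d\}=\emptyset$ and either $a<c<b<d$, or $1<a<c<d<b$. *)

From mathcomp Require Import all_boot.
Set Implicit Arguments. Unset Strict Implicit. Unset Printing Implicit Defensive.

(* A vertex ab (a<b) of G_n is encoded as the pair (a, b) of naturals. *)

Definition stable (n : nat) (v : nat * nat) : bool :=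
  let: (a, b) := v in
  [&& 1 <= a, a < b, b <= n, b != a.+1 & ~~ ((a == 1) && (b == n))].

Definition adj_oriented (u v : nat * nat) : bool :=
  let: (a, b) := u in let: (c, d) := v in
  [&& a < c,
      [&& a != c, a != d, b != c & b != d] &
      (a < c) && (c < b) && (b < d) || (1 < a) && (a < c) && (c < d) && (d < b)].

Definition Gn_edge (n : nat) (u v : nat * nat) : bool :=
  [&& stable n u, stable n v & adj_oriented u v || adj_oriented v u].

Definition Gn_minus_edge_colourable (n : nat) (e1 e2 : nat * nat) (k : nat) : Prop :=
  exists f : nat * nat -> 'I_k,
    forall u v, Gn_edge n u v ->
      ~~ (((u == e1) && (v == e2)) || ((u == e2) && (v == e1))) ->
      f u != f v.

From mathcomp Require Import all_boot zify.
Set Implicit Arguments. Unset Strict Implicit. Unset Printing Implicit Defensive.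

(* Deleting a point k of [n] and relabelling the others maps the
   stable pairs avoiding k, except one collapsed pair, to vertices of G_(n-1) and
   preserves adjacency. The pairs through k are pairwise non-adjacent and share one
   new colour, and the collapsed pair borrows the colour of (1, k + 1). A point k
   compatible with the removed edge exists by counting for n >= 11 and by enumeration
   for n <= 10, except for one edge of G_5 and one of G_6, which are coloured by hand;
   G_4 has a single edge. *)

Definition incident (k : nat) (u : nat * nat) : bool := (u.1 == k) || (u.2 == k).

Definition unbump_pair (k : nat) (u : nat * nat) : nat * nat :=
  (unbump k u.1, unbump k u.2).

(* The one pair avoiding k that is no longer stable once k is deleted: for k < n
   its points become consecutive, for k = n it becomes {1, n - 1}. *)
Definition collapsed_pair (n k : nat) : nat * nat :=
  if k == n then (1, n.-1) else (k.-1, k.+1).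

(* The collapsed pair is sent where (1, k + 1) goes; it can only do so because
   every neighbour of it avoiding k is a neighbour of (1, k + 1). *)
Definition shrink (n k : nat) (u : nat * nat) : nat * nat :=
  unbump_pair k (if u == collapsed_pair n k then (1, k.+1) else u).

(* The endpoints of the removed edge survive the deletion of k, and no other edge
   is shrunk onto it. *)
Definition good_deletion (n : nat) (e1 e2 : nat * nat) (k : nat) : bool :=
  [&& 2 <= k <= n, ~~ incident k e1, ~~ incident k e2,
      collapsed_pair n k \notin [:: e1; e2] &
      (4 <= k <= n - 2) ==> ((1, k.+1) \notin [:: e1; e2])].

Lemma Gn_edge_sym n u v : Gn_edge n u v -> Gn_edge n v u.
Proof. by case/and3P=> su sv uv; rewrite /Gn_edge su sv orbC. Qed.

Lemma Gn_edge_irr n u : ~~ Gn_edge n u u.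
Proof. by case: u => a b; rewrite /Gn_edge /adj_oriented /= ltnn !andbF. Qed.

Lemma Gn_edge_incident n k u v : Gn_edge n u v -> incident k u -> ~~ incident k v.
Proof. case: u v => a b [c d]; rewrite /Gn_edge /adj_oriented /incident /=; lia. Qed.

Lemma ltn_unbump2 k i j : i != k -> j != k -> (unbump k i < unbump k j) = (i < j).
Proof. rewrite /unbump; lia. Qed.

Lemma eqn_unbump2 k i j : i != k -> j != k -> (unbump k i == unbump k j) = (i == j).
Proof. rewrite /unbump; lia. Qed.

Lemma ltn1_unbump k i : 1 < k -> i != k -> (1 < unbump k i) = (1 < i).
Proof. rewrite /unbump; lia. Qed.

Lemma unbump_pair_inj k u w : ~~ incident k u -> ~~ incident k w ->
  (unbump_pair k u == unbump_pair k w) = (u == w).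
Proof.
case: u w => a b [c d]; rewrite /incident !negb_or /= => /andP[ak bk] /andP[ck dk].
by rewrite !xpair_eqE !eqn_unbump2.
Qed.

Lemma stable_unbump_pair n k u : 2 <= k <= n -> stable n u -> ~~ incident k u ->
  u != collapsed_pair n k -> stable n.-1 (unbump_pair k u).
Proof.
case: u => a b => kn; rewrite /stable /collapsed_pair /incident /unbump_pair /unbump /=.
by case: (k =P n) => [-> | /eqP kn']; rewrite xpair_eqE; lia.
Qed.

Lemma adj_oriented_unbump_pair k u v : 1 < k -> ~~ incident k u -> ~~ incident k v ->
  adj_oriented u v -> adj_oriented (unbump_pair k u) (unbump_pair k v).
Proof.
case: u v => a b [c d]; rewrite /incident !negb_or /= => k1 /andP[ak bk] /andP[ck dk].
by rewrite /adj_oriented !ltn_unbump2 // !eqn_unbump2 // ltn1_unbump.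
Qed.

Lemma Gn_edge_unbump_pair n k u v : 2 <= k <= n -> Gn_edge n u v ->
    ~~ incident k u -> ~~ incident k v ->
    u != collapsed_pair n k -> v != collapsed_pair n k ->
  Gn_edge n.-1 (unbump_pair k u) (unbump_pair k v).
Proof.
move=> kn /and3P[su sv uv] ku kv uc vc.
rewrite /Gn_edge !stable_unbump_pair //.
have k1 : 1 < k by case/andP: kn.
by case/orP: uv => uv; apply/orP; [left | right]; apply: adj_oriented_unbump_pair.
Qed.

Lemma collapsed_pair_neighbour n k v : 2 <= k <= n ->
    Gn_edge n (collapsed_pair n k) v -> ~~ incident k v ->
  (4 <= k <= n - 2) && Gn_edge n (1, k.+1) v.
Proof.
case: v => c d; rewrite /collapsed_pair => kn; case: (k =P n) => [-> | /eqP kn'];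
rewrite /Gn_edge /stable /adj_oriented /incident /=; lia.
Qed.

Lemma Gn_edge_shrink n k u v : 2 <= k <= n -> Gn_edge n u v ->
  ~~ incident k u -> ~~ incident k v -> Gn_edge n.-1 (shrink n k u) (shrink n k v).
Proof.
move=> kn.
have shrink_edge w x : Gn_edge n w x -> ~~ incident k w -> ~~ incident k x ->
    x != collapsed_pair n k -> Gn_edge n.-1 (shrink n k w) (shrink n k x).
  move=> wx kw kx xc; rewrite /shrink (negbTE xc).
  have [wc | wc] := eqVneq w (collapsed_pair n k); last exact: Gn_edge_unbump_pair.
  move: wx; rewrite wc => /(collapsed_pair_neighbour kn)/(_ kx)/andP[k4 tx].
  have [tk tc] : ~~ incident k (1, k.+1) /\ (1, k.+1) != collapsed_pair n k.
    by rewrite /incident /collapsed_pair /=; case: (eqVneq k n); rewrite ?xpair_eqE; lia.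
  exact: Gn_edge_unbump_pair.
move=> uv ku kv; have [vc | vc] := eqVneq v (collapsed_pair n k); last exact: shrink_edge.
apply/Gn_edge_sym/shrink_edge; [exact: Gn_edge_sym | by [] | by [] |].
by apply: contraTneq uv => ->; rewrite vc Gn_edge_irr.
Qed.

Lemma shrink_eq n e1 e2 k u v e : good_deletion n e1 e2 k -> e \in [:: e1; e2] ->
    Gn_edge n u v -> ~~ incident k u -> ~~ incident k v ->
  (shrink n k u == shrink n k e) = (u == e).
Proof.
case/and5P=> kn ke1 ke2 ce te eE uv ku kv.
have ke : ~~ incident k e by move: eE; rewrite !inE => /orP[]/eqP->.
have ec : e != collapsed_pair n k by apply: contraNneq ce => <-.
rewrite /shrink (negbTE ec).
have [uc | uc] := eqVneq u (collapsed_pair n k); last by rewrite unbump_pair_inj.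
move: uv; rewrite uc => /(collapsed_pair_neighbour kn)/(_ kv)/andP[k4 _].
rewrite unbump_pair_inj //; last by rewrite /incident /=; lia.
rewrite [collapsed_pair n k == e]eq_sym (negbTE ec).
by apply/negbTE; apply: contraNneq (implyP te k4) => ->.
Qed.

Lemma colourable_of_good_deletion n e1 e2 k c : good_deletion n e1 e2 k ->
    Gn_minus_edge_colourable n.-1 (shrink n k e1) (shrink n k e2) c ->
  Gn_minus_edge_colourable n e1 e2 c.+1.
Proof.
move=> good [g g_proper].
exists (fun x => if incident k x then ord_max else widen_ord (leqnSn c) (g (shrink n k x))).
move=> u v uv not_e; have kn : 2 <= k <= n by case/andP: good.
case: (boolP (incident k u)) => ku; case: (boolP (incident k v)) => kv.
- by have := Gn_edge_incident uv ku; rewrite kv.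
- by rewrite -val_eqE /= neq_ltn ltn_ord orbT.
- by rewrite -val_eqE /= neq_ltn ltn_ord.
rewrite -val_eqE /= val_eqE; apply: g_proper; first exact: Gn_edge_shrink.
have vu := Gn_edge_sym uv.
by rewrite !(shrink_eq good _ uv) ?(shrink_eq good _ vu) ?inE ?eqxx ?orbT.
Qed.

Definition pairs_upto (n : nat) : seq (nat * nat) :=
  [seq (a, b) | a <- iota 1 n, b <- iota 1 n].

Lemma Gn_edge_enum n (P : rel (nat * nat)) :
    allrel (fun u v => Gn_edge n u v ==> P u v) (pairs_upto n) (pairs_upto n) ->
  forall u v, Gn_edge n u v -> P u v.
Proof.
have pairs_stable w : stable n w -> w \in pairs_upto n.
  case: w => a b; rewrite /stable => sab; apply/allpairsP; exists (a, b).
  by rewrite /= !mem_iota; split=> //; lia.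
move=> /allrelP enum u v uv; move/and3P: (uv) => [su sv _].
by have /implyP := enum u v (pairs_stable u su) (pairs_stable v sv); apply.
Qed.

Lemma Gn_minus_edge_colourable_enum n e1 e2 c (f : nat * nat -> 'I_c) :
    allrel (fun u v => Gn_edge n u v ==>
      ~~ (((u == e1) && (v == e2)) || ((u == e2) && (v == e1))) ==> (f u != f v))
      (pairs_upto n) (pairs_upto n) ->
  Gn_minus_edge_colourable n e1 e2 c.
Proof. by move/Gn_edge_enum=> proper; exists f => u v /proper/implyP. Qed.

Lemma G4_edge u v : Gn_edge 4 u v -> (u, v) \in [:: ((1, 3), (2, 4)); ((2, 4), (1, 3))].
Proof. by move: u v; apply: Gn_edge_enum; vm_compute. Qed.

Lemma G4_minus_edge_colourable e1 e2 : Gn_edge 4 e1 e2 ->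
  Gn_minus_edge_colourable 4 e1 e2 (4 - 3).
Proof.
move=> /G4_edge; rewrite !inE => /orP[]/eqP[-> ->].
all: by apply: (@Gn_minus_edge_colourable_enum _ _ _ _ (fun=> ord0)); vm_compute.
Qed.

Definition exceptional_edge (n : nat) (e1 e2 : nat * nat) : bool :=
  (n == 5) && ((e1, e2) \in [:: ((2, 4), (3, 5)); ((3, 5), (2, 4))]) ||
  (n == 6) && ((e1, e2) \in [:: ((2, 6), (3, 5)); ((3, 5), (2, 6))]).

Lemma exceptional_colourable n e1 e2 : exceptional_edge n e1 e2 ->
  Gn_minus_edge_colourable n e1 e2 (n - 3).
Proof.
case/orP=> /andP[/eqP-> e12]; move: e12; rewrite !inE => /orP[]/eqP[-> ->].
1,2: apply: (@Gn_minus_edge_colourable_enum _ _ _ _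
       (fun u => if u.1 == 1 then ord0 else ord_max)).
3,4: apply: (@Gn_minus_edge_colourable_enum _ _ _ _
       (fun u => if u \in [:: (1, 3); (1, 4); (4, 6)] then ord0
                 else if u \in [:: (1, 5); (2, 4); (2, 5)] then Ordinal (isT : 1 < 3)
                 else ord_max)).
all: by vm_compute.
Qed.

Lemma exists_good_deletion_large n e1 e2 : 11 <= n -> exists k, good_deletion n e1 e2 k.
Proof.
case: e1 e2 => a b [c d] n11.
(* Apart from the endpoints, the collapsed pair is an endpoint of the edge only for
   k = a + 1, c + 1 or n, and (1, k + 1) only for k = b - 1 or d - 1. *)
set bad := [:: a; b; c; d; a.+1; c.+1; n; b.-1; d.-1].
have [k] : exists2 k, k \in iota 2 n.-1 & k \notin bad.
  apply/allPn/negP => /allP sub.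
  by have := uniq_leq_size (iota_uniq 2 n.-1) sub; rewrite size_iota /=; lia.
rewrite mem_iota /bad !inE => k_range k_ok; exists k.
rewrite /good_deletion /incident /collapsed_pair !inE /=.
by case: (eqVneq k n); rewrite ?xpair_eqE; lia.
Qed.

Lemma exists_good_deletion n e1 e2 : 5 <= n -> Gn_edge n e1 e2 ->
  ~~ exceptional_edge n e1 e2 -> exists k, good_deletion n e1 e2 k.
Proof.
move=> n5 e12 not_exc; have [n10 | n10] := leqP n 10; last exact: exists_good_deletion_large.
suff /hasP[k _ good] : has (good_deletion n e1 e2) (iota 2 n.-1) by exists k.
have small : all (fun n => allrel (fun u v => Gn_edge n u v ==>
    exceptional_edge n u v || has (good_deletion n u v) (iota 2 n.-1))
    (pairs_upto n) (pairs_upto n)) (iota 5 6) by vm_compute.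
have /(allP small)/Gn_edge_enum/(_ e1 e2 e12) : n \in iota 5 6 by rewrite mem_iota; lia.
by rewrite (negbTE not_exc).
Qed.

Theorem lemma4 (n : nat) (e1 e2 : nat * nat) :
  4 <= n -> Gn_edge n e1 e2 -> Gn_minus_edge_colourable n e1 e2 (n - 3).
Proof.
elim: n e1 e2 => // m IH e1 e2 m3 e12.
have [m_le3 | m4] := leqP m 3.
  have m_eq3 : m = 3 by lia.
  by move: e12; rewrite m_eq3; apply: G4_minus_edge_colourable.
have [exc | not_exc] := boolP (exceptional_edge m.+1 e1 e2).
  exact: exceptional_colourable.
have [k good] := exists_good_deletion (m4 : 4 < m.+1) e12 not_exc.
have -> : m.+1 - 3 = (m - 3).+1 by lia.
apply: (colourable_of_good_deletion good); apply: IH => //.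
by case/and3P: good => kn ke1 /andP[ke2 _]; apply: Gn_edge_shrink.
Qed.
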